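(* Let $p_1,p_2,q_1,q_2\in\mathbb C\setminus\{0\}$, and suppose the multiplicative subgroup of $\mathbb C^*$ generated by $p_1$ and $p_2$ is dense in $\mathbb C$. If $f\colon\mathbb C\to\mathbb C$ is a homeomorphism with $f(p_rw)=q_rf(w)$ for all $w\in\mathbb C$, $r=1,2$, then there exist $\gamma\in\mathbb C$ and $\alpha\in\mathbb C$ with $\operatorname{Re}\alpha>-1$ such that either $f(w)=\gamma w|w|^{\alpha}$ for all $w\in\mathbb C$, or $f(w)=\gamma\overline{w}|w|^{\alpha}$ for all $w\in\mathbb C$ (with $f(0)=0$).
   Context: For $w\neq0$ and complex $\alpha$, $|w|^\alpha=e^{\alpha\ln|w|}$. *)

From Stdlib Require Import Reals ZArith.
Open Scope R_scope.

Definition Cplx : Type := (R * R)%type.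

Definition Cre (z : Cplx) : R := fst z.
Definition Cim (z : Cplx) : R := snd z.
Definition C0 : Cplx := (0, 0).
Definition C1 : Cplx := (1, 0).
Definition Cadd (z w : Cplx) : Cplx := (fst z + fst w, snd z + snd w).
Definition Csub (z w : Cplx) : Cplx := (fst z - fst w, snd z - snd w).
Definition Cmul (z w : Cplx) : Cplx :=
  (fst z * fst w - snd z * snd w, fst z * snd w + snd z * fst w).
Definition Cconj (z : Cplx) : Cplx := (fst z, - snd z).
Definition Cabs (z : Cplx) : R := sqrt (fst z * fst z + snd z * snd z).
Definition Cinv (z : Cplx) : Cplx :=
  let d := fst z * fst z + snd z * snd z in (fst z / d, - snd z / d).

Definition Cexp (z : Cplx) : Cplx := (exp (fst z) * cos (snd z), exp (fst z) * sin (snd z)).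

(* |w|^alpha := e^(alpha ln|w|) for w <> 0 and complex alpha *)
Definition Cabs_pow (w alpha : Cplx) : Cplx :=
  Cexp (fst alpha * ln (Cabs w), snd alpha * ln (Cabs w)).

Fixpoint Cpow (z : Cplx) (n : nat) : Cplx :=
  match n with O => C1 | S k => Cmul z (Cpow z k) end.
Definition Cpowz (z : Cplx) (k : Z) : Cplx :=
  match k with
  | Z0 => C1
  | Zpos p => Cpow z (Pos.to_nat p)
  | Zneg p => Cinv (Cpow z (Pos.to_nat p))
  end.

Definition Ccontinuous (f : Cplx -> Cplx) : Prop :=
  forall z eps, 0 < eps -> exists delta, 0 < delta /\
    forall w, Cabs (Csub w z) < delta -> Cabs (Csub (f w) (f z)) < eps.

Definition Chomeomorphism (f : Cplx -> Cplx) : Prop :=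
  exists g : Cplx -> Cplx,
    (forall w, g (f w) = w) /\ (forall w, f (g w) = w) /\
    Ccontinuous f /\ Ccontinuous g.

(* the multiplicative subgroup of C^* generated by p1, p2 (abelian, so it is
   { p1^m p2^n : m n in Z }) is dense in C *)
Definition subgroup2_dense (p1 p2 : Cplx) : Prop :=
  forall z eps, 0 < eps -> exists m n : Z,
    Cabs (Csub (Cmul (Cpowz p1 m) (Cpowz p2 n)) z) < eps.

(** The scaling factors of [f] (those [a] with [f (a w) = l f w] for some [l])
    form a multiplicative group containing [p1] and [p2], hence a dense subset
    of C; by continuity [f (z w) f 1 = f z f w] for all [z, w], so
    [F := f / f 1] is a continuous injective multiplicative map of C.  On the
    lines [s ↦ e^s] and [t ↦ e^(it)] it restricts to continuous homomorphisms
    [R -> C^*], which are [s ↦ e^(b s)] by a local logarithm and Cauchy's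
    functional equation.  Injectivity of [F] on the unit circle forces the
    angular exponent to be [±1], and [F 0 = 0] with continuity at [0] forces
    the radial exponent to be positive. *)

From Pilot Require Import Defs.
From Stdlib Require Import Reals ZArith Lra Lia Psatz.
Open Scope R_scope.
(* [C1] also names a predicate of the Reals library. *)
Notation C1 := Defs.C1.

Lemma Ceq_dec (a b : Cplx) : a = b \/ a <> b.
Proof.
  destruct a as [a1 a2], b as [b1 b2].
  destruct (Req_dec a1 b1), (Req_dec a2 b2); subst;
    [left; reflexivity | right; intro E; injection E; auto ..].
Qed.

Lemma C0_neq_C1 : C0 <> C1.
Proof. unfold C0, C1; intro E; injection E; lra. Qed.

Lemma Csub_eq0 a b : Csub a b = C0 -> a = b.
Proof. destruct a, b; unfold Csub, C0; simpl; intro E; injection E; intros; f_equal; lra. Qed.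

Lemma Cmul_comm a b : Cmul a b = Cmul b a.
Proof. destruct a, b; unfold Cmul; simpl; f_equal; ring. Qed.

Lemma Cmul_assoc a b c : Cmul a (Cmul b c) = Cmul (Cmul a b) c.
Proof. destruct a, b, c; unfold Cmul; simpl; f_equal; ring. Qed.

Lemma Cmul_1_l a : Cmul C1 a = a.
Proof. destruct a; unfold Cmul, C1; simpl; f_equal; ring. Qed.

Lemma Cmul_1_r a : Cmul a C1 = a.
Proof. rewrite Cmul_comm; apply Cmul_1_l. Qed.

Lemma Cmul_0_r a : Cmul a C0 = C0.
Proof. destruct a; unfold Cmul, C0; simpl; f_equal; ring. Qed.

Lemma Cmul_0_l a : Cmul C0 a = C0.
Proof. rewrite Cmul_comm; apply Cmul_0_r. Qed.

Lemma Csub_mul_l k a b : Csub (Cmul k a) (Cmul k b) = Cmul k (Csub a b).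
Proof. destruct k, a, b; unfold Csub, Cmul; simpl; f_equal; ring. Qed.

Lemma Cconj_Cexp L t : Cconj (Cexp (L, t)) = Cexp (L, - t).
Proof. unfold Cconj, Cexp; simpl. rewrite cos_neg, sin_neg. f_equal; ring. Qed.

Lemma Cexp_add a b : Cexp (Cadd a b) = Cmul (Cexp a) (Cexp b).
Proof.
  destruct a, b; unfold Cexp, Cadd, Cmul; simpl.
  rewrite exp_plus, cos_plus, sin_plus. f_equal; ring.
Qed.


Definition nsq (z : Cplx) : R := fst z * fst z + snd z * snd z.

Lemma nsq_ge0 z : 0 <= nsq z.
Proof. destruct z as [a b]; unfold nsq; simpl; nra. Qed.

Lemma nsq_pos z : z <> C0 -> 0 < nsq z.
Proof.
  destruct z as [a b]; unfold nsq, C0; simpl; intro Hz.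
  destruct (Req_dec a 0), (Req_dec b 0); subst; [now contradiction Hz | nra ..].
Qed.

Lemma nsq_mul a b : nsq (Cmul a b) = nsq a * nsq b.
Proof. destruct a, b; unfold nsq, Cmul; simpl; ring. Qed.

Lemma Cabs_ge0 z : 0 <= Cabs z.
Proof. apply sqrt_pos. Qed.

Lemma Cabs_pos z : z <> C0 -> 0 < Cabs z.
Proof. intro Hz; apply sqrt_lt_R0, nsq_pos, Hz. Qed.

Lemma Cabs_sq z : Cabs z * Cabs z = nsq z.
Proof. apply sqrt_sqrt, nsq_ge0. Qed.

Lemma Cabs_mul a b : Cabs (Cmul a b) = Cabs a * Cabs b.
Proof. unfold Cabs; fold (nsq (Cmul a b)) (nsq a) (nsq b). rewrite nsq_mul. apply sqrt_mult; apply nsq_ge0. Qed.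

Lemma Cabs_C1 : Cabs C1 = 1.
Proof. unfold Cabs, C1; simpl. replace (1 * 1 + 0 * 0) with 1 by ring. apply sqrt_1. Qed.

Lemma Cabs_Cexp z : Cabs (Cexp z) = exp (fst z).
Proof.
  destruct z as [a b]; unfold Cabs, Cexp; simpl.
  replace (exp a * cos b * (exp a * cos b) + exp a * sin b * (exp a * sin b)) with (Rsqr (exp a))
    by (unfold Rsqr; pose proof (sin2_cos2 b) as E; unfold Rsqr in E; nra).
  apply sqrt_Rsqr. left; apply exp_pos.
Qed.

Lemma Cabs_sub_sym a b : Cabs (Csub a b) = Cabs (Csub b a).
Proof. destruct a, b; unfold Cabs, Csub; simpl; f_equal; ring. Qed.

Lemma Cabs_components z : Rabs (fst z) <= Cabs z /\ Rabs (snd z) <= Cabs z /\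
  Cabs z <= Rabs (fst z) + Rabs (snd z).
Proof.
  destruct z as [x y]; unfold Cabs; simpl.
  pose proof (sqrt_pos (x * x + y * y)). pose proof (sqrt_sqrt (x * x + y * y)).
  pose proof (Rabs_pos x); pose proof (Rabs_pos y).
  assert (Rabs x * Rabs x = x * x) by (rewrite <- Rabs_mult; apply Rabs_right; nra).
  assert (Rabs y * Rabs y = y * y) by (rewrite <- Rabs_mult; apply Rabs_right; nra).
  assert (sqrt (x * x + y * y) * sqrt (x * x + y * y) = x * x + y * y) by (apply sqrt_sqrt; nra).
  repeat split; nra.
Qed.

Lemma Cabs_triangle a b : Cabs (Cadd a b) <= Cabs a + Cabs b.
Proof.
  pose proof (Cabs_ge0 a); pose proof (Cabs_ge0 b); pose proof (Cabs_ge0 (Cadd a b)).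
  apply Rsqr_incr_0_var; [|lra]. unfold Rsqr.
  replace ((Cabs a + Cabs b) * (Cabs a + Cabs b))
    with (Cabs a * Cabs a + Cabs b * Cabs b + 2 * (Cabs a * Cabs b)) by ring.
  rewrite !Cabs_sq. unfold Cabs. rewrite <- sqrt_mult by apply nsq_ge0.
  destruct a as [x1 y1], b as [x2 y2]; unfold nsq, Cadd; simpl.
  (* Cauchy–Schwarz *)
  assert (x1 * x2 + y1 * y2 <= sqrt ((x1 * x1 + y1 * y1) * (x2 * x2 + y2 * y2))).
  { destruct (Rle_dec (x1 * x2 + y1 * y2) 0).
    - apply Rle_trans with 0; [lra | apply sqrt_pos].
    - apply Rsqr_incr_0_var; [|apply sqrt_pos]. rewrite Rsqr_sqrt by nra.
      unfold Rsqr. pose proof (Rle_0_sqr (x1 * y2 - x2 * y1)); unfold Rsqr in *; nra. }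
  nra.
Qed.

Lemma Cabs_sub_triangle a b c : Cabs (Csub a c) <= Cabs (Csub a b) + Cabs (Csub b c).
Proof.
  replace (Csub a c) with (Cadd (Csub a b) (Csub b c))
    by (destruct a, b, c; unfold Cadd, Csub; simpl; f_equal; ring).
  apply Cabs_triangle.
Qed.


Lemma Cmul_inv z : z <> C0 -> Cmul z (Cinv z) = C1.
Proof.
  intro Hz. pose proof (nsq_pos z Hz). destruct z as [a b]; unfold nsq in *; simpl in *.
  unfold Cmul, Cinv, C1; simpl; f_equal; field; lra.
Qed.

Lemma Cmul_inv_l z : z <> C0 -> Cmul (Cinv z) z = C1.
Proof. rewrite Cmul_comm; apply Cmul_inv. Qed.

Lemma Cmul_neq0 a b : a <> C0 -> b <> C0 -> Cmul a b <> C0.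
Proof.
  intros Ha Hb E. pose proof (nsq_pos a Ha). pose proof (nsq_pos b Hb).
  assert (nsq (Cmul a b) = 0) as N by (rewrite E; unfold nsq, C0; simpl; ring).
  rewrite nsq_mul in N. nra.
Qed.

Lemma Cpow_neq0 a k : a <> C0 -> Cpow a k <> C0.
Proof.
  intro Ha. induction k; simpl; [intro E; exact (C0_neq_C1 (eq_sym E)) | apply Cmul_neq0; auto].
Qed.

Lemma Cmul_cancel_l a x y : a <> C0 -> Cmul a x = Cmul a y -> x = y.
Proof.
  intros Ha E.
  rewrite <- (Cmul_1_l x), <- (Cmul_1_l y), <- (Cmul_inv_l a Ha), <- !Cmul_assoc, E.
  reflexivity.
Qed.

Lemma Cmul_self_eq0 a : Cmul a a = C0 -> a = C0.
Proof. intro E. destruct (Ceq_dec a C0) as [|Ha]; [assumption | now destruct (Cmul_neq0 a a Ha Ha)]. Qed.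

Lemma Ccontinuous_comp f g : Ccontinuous f -> Ccontinuous g -> Ccontinuous (fun z => f (g z)).
Proof.
  intros Hf Hg z e He. destruct (Hf (g z) e He) as [d1 [Hd1 Hf']].
  destruct (Hg z d1 Hd1) as [d2 [Hd2 Hg']]. exists d2; split; auto.
Qed.

Lemma Ccontinuous_scale c : Ccontinuous (Cmul c).
Proof.
  intros z e He. pose proof (Cabs_ge0 c).
  exists (e / (Cabs c + 1)); split; [apply Rdiv_lt_0_compat; lra|].
  intros w Hw. rewrite Csub_mul_l, Cabs_mul.
  apply Rle_lt_trans with ((Cabs c + 1) * Cabs (Csub w z)); [pose proof (Cabs_ge0 (Csub w z)); nra|].
  apply Rmult_lt_reg_r with (/ (Cabs c + 1)); [apply Rinv_0_lt_compat; lra|].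
  replace ((Cabs c + 1) * Cabs (Csub w z) * / (Cabs c + 1)) with (Cabs (Csub w z)) by (field; lra).
  exact Hw.
Qed.

Lemma Ccontinuous_sub f g : Ccontinuous f -> Ccontinuous g -> Ccontinuous (fun z => Csub (f z) (g z)).
Proof.
  intros Hf Hg z e He.
  destruct (Hf z (e / 2)) as [d1 [Hd1 Hf']]; [lra|]. destruct (Hg z (e / 2)) as [d2 [Hd2 Hg']]; [lra|].
  exists (Rmin d1 d2); split; [apply Rmin_glb_lt; lra|]. intros w Hw.
  specialize (Hf' w (Rlt_le_trans _ _ _ Hw (Rmin_l _ _))).
  specialize (Hg' w (Rlt_le_trans _ _ _ Hw (Rmin_r _ _))).
  replace (Csub (Csub (f w) (g w)) (Csub (f z) (g z)))
    with (Cadd (Csub (f w) (f z)) (Csub (g z) (g w)))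
    by (destruct (f w), (g w), (f z), (g z); unfold Cadd, Csub; simpl; f_equal; ring).
  pose proof (Cabs_triangle (Csub (f w) (f z)) (Csub (g z) (g w))) as T.
  rewrite (Cabs_sub_sym (g z)) in T. lra.
Qed.

Definition Cdense (S : Cplx -> Prop) : Prop :=
  forall z eps, 0 < eps -> exists a, S a /\ Cabs (Csub a z) < eps.

Lemma Ccontinuous_dense_eq0 (h : Cplx -> Cplx) (S : Cplx -> Prop) :
  Ccontinuous h -> Cdense S -> (forall a, S a -> h a = C0) -> forall z, h z = C0.
Proof.
  intros Hh HS H0 z. destruct (Ceq_dec (h z) C0) as [|Hz]; [assumption|]. exfalso.
  destruct (Hh z (Cabs (h z)) (Cabs_pos _ Hz)) as [d [Hd Hh']].
  destruct (HS z d Hd) as [a [Sa Ha]]. specialize (Hh' a Ha). rewrite H0 in Hh' by exact Sa.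
  replace (Csub C0 (h z)) with (Cmul (-1, 0) (h z)) in Hh'
    by (destruct (h z); unfold Cmul, Csub, C0; simpl; f_equal; ring).
  rewrite Cabs_mul in Hh'. replace (Cabs (-1, 0)) with 1 in Hh'; [lra|].
  unfold Cabs; simpl. replace (-1 * -1 + 0 * 0) with 1 by ring. symmetry; apply sqrt_1.
Qed.

Definition rescales (f : Cplx -> Cplx) (a : Cplx) : Prop :=
  exists l, forall w, f (Cmul a w) = Cmul l (f w).

Section Rescaling.
Variable f : Cplx -> Cplx.
Hypothesis f_inj : forall a b, f a = f b -> a = b.

Lemma rescales_1 : rescales f C1.
Proof. exists C1; intro w; rewrite !Cmul_1_l; reflexivity. Qed.

Lemma rescales_mul a b : rescales f a -> rescales f b -> rescales f (Cmul a b).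
Proof.
  intros [la Ha] [lb Hb]. exists (Cmul la lb); intro w.
  rewrite <- Cmul_assoc, Ha, Hb, Cmul_assoc. reflexivity.
Qed.

Lemma rescales_inv a : a <> C0 -> rescales f a -> rescales f (Cinv a).
Proof.
  intros Ha0 [l Ha].
  (* [l = 0] would give [f (a^-1 a) = f 0], contradicting injectivity. *)
  assert (Hl : l <> C0).
  { intro E; subst l. apply C0_neq_C1, f_inj.
    rewrite <- (Cmul_inv a Ha0), Ha, Cmul_0_l, <- (Cmul_0_r a) at 1.
    rewrite Ha, Cmul_0_l. reflexivity. }
  exists (Cinv l); intro w. apply (Cmul_cancel_l l); [exact Hl|].
  rewrite <- Ha, !Cmul_assoc, !Cmul_inv, !Cmul_1_l by assumption. reflexivity.
Qed.

Lemma rescales_Cpow a k : rescales f a -> rescales f (Cpow a k).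
Proof. intro Ha; induction k; simpl; [apply rescales_1 | apply rescales_mul; assumption]. Qed.

Lemma rescales_Cpowz a m : a <> C0 -> rescales f a -> rescales f (Cpowz a m).
Proof.
  intros Ha0 Ha. destruct m; simpl; [apply rescales_1 | apply rescales_Cpow, Ha |].
  apply rescales_inv; [apply Cpow_neq0, Ha0 | apply rescales_Cpow, Ha].
Qed.

End Rescaling.

Lemma rescales_mul_identity f a : rescales f a ->
  forall w, Cmul (f (Cmul a w)) (f C1) = Cmul (f a) (f w).
Proof.
  intros [l Ha] w. rewrite Ha, <- (Cmul_1_r a), Ha.
  destruct l, (f w), (f C1); unfold Cmul; simpl; f_equal; ring.
Qed.

Lemma dense_rescales_mul_identity f : Ccontinuous f -> Cdense (rescales f) ->
  forall z w, Cmul (f (Cmul z w)) (f C1) = Cmul (f z) (f w).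
Proof.
  intros Hf HS z w. rewrite (Cmul_comm z).
  set (h := fun z => Csub (Cmul (f C1) (f (Cmul w z))) (Cmul (f w) (f z))).
  assert (Hh : forall z, h z = C0).
  { apply (Ccontinuous_dense_eq0 h (rescales f)); [| exact HS |].
    - apply Ccontinuous_sub.
      + apply (Ccontinuous_comp (Cmul (f C1))); [apply Ccontinuous_scale |].
        apply Ccontinuous_comp; [exact Hf | apply Ccontinuous_scale].
      + apply (Ccontinuous_comp (Cmul (f w))); [apply Ccontinuous_scale | exact Hf].
    - intros a Ha. unfold h. rewrite (Cmul_comm w), Cmul_comm, rescales_mul_identity by exact Ha.
      rewrite Cmul_comm. destruct (Cmul (f a) (f w)); unfold Csub, C0; simpl; f_equal; ring. }
  apply Csub_eq0. rewrite Cmul_comm, (Cmul_comm (f z)). exact (Hh z).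
Qed.

Lemma subgroup2_dense_rescales f p1 p2 : (forall a b, f a = f b -> a = b) ->
  p1 <> C0 -> p2 <> C0 -> rescales f p1 -> rescales f p2 ->
  subgroup2_dense p1 p2 -> Cdense (rescales f).
Proof.
  intros Hinj Hp1 Hp2 H1 H2 Hd z e He. destruct (Hd z e He) as [m [n Hmn]].
  exists (Cmul (Cpowz p1 m) (Cpowz p2 n)); split; [|exact Hmn].
  apply rescales_mul; apply rescales_Cpowz; assumption.
Qed.

Definition locally_additive (h : R) (L : R -> R) : Prop :=
  forall s t, Rabs s <= h -> Rabs t <= h -> Rabs (s + t) <= h -> L (s + t) = L s + L t.

Definition small_near0 (L : R -> R) : Prop :=
  forall e, 0 < e -> exists d, 0 < d /\ forall x, Rabs x < d -> Rabs (L x) < e.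

Lemma Rabs_lt_all_eq0 (x : R) : (forall e, 0 < e -> Rabs x < e) -> x = 0.
Proof.
  intro H. destruct (Req_dec x 0) as [|Hx]; [assumption|].
  specialize (H (Rabs x) (Rabs_pos_lt _ Hx)); lra.
Qed.

Lemma nat_floor r : 0 <= r -> exists m : nat, INR m <= r < INR m + 1.
Proof.
  intro Hr. destruct (base_Int_part r) as [Hlo Hhi].
  assert (H0 : (0 <= Int_part r)%Z).
  { assert (IZR (-1) < IZR (Int_part r)) as H by (simpl; lra). apply lt_IZR in H; lia. }
  exists (Z.to_nat (Int_part r)). rewrite INR_IZR_INZ, Z2Nat.id by exact H0. lra.
Qed.

Section LocalCauchy.
Variables (h : R) (L : R -> R).
Hypothesis h_pos : 0 < h.
Hypothesis L_add : locally_additive h L.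
Hypothesis L_small : small_near0 L.

Lemma local_additive_0 : L 0 = 0.
Proof.
  assert (H0 : Rabs 0 <= h) by (rewrite Rabs_R0; lra).
  pose proof (L_add 0 0 H0 H0) as E. rewrite Rplus_0_r in E. specialize (E H0). lra.
Qed.

Lemma local_additive_opp y : Rabs y <= h -> L (- y) = - L y.
Proof.
  intro Hy. assert (H0 : Rabs 0 <= h) by (rewrite Rabs_R0; lra).
  pose proof (L_add y (- y) Hy) as E. rewrite Rabs_Ropp, Rplus_opp_r, local_additive_0 in E.
  specialize (E Hy H0). lra.
Qed.

Lemma local_additive_nat (k : nat) y : 0 <= y -> INR k * y <= h -> L (INR k * y) = INR k * L y.
Proof.
  intro Hy. induction k as [|k IH]; intro Hk.
  - simpl. rewrite !Rmult_0_l. apply local_additive_0.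
  - rewrite S_INR in *. pose proof (pos_INR k).
    replace ((INR k + 1) * y) with (INR k * y + y) by ring.
    rewrite L_add, IH by (rewrite ?Rabs_right; nra). ring.
Qed.

(* With [y = h/N < d] and [L y = L h / N = 0], [L x = L (x - m y)] for the
   integer part [m] of [x / y], and [0 <= x - m y < d]. *)
Lemma local_additive_vanish : L h = 0 -> forall x, Rabs x <= h -> L x = 0.
Proof.
  intro Lh.
  assert (Hpos : forall x, 0 <= x <= h -> L x = 0).
  { intros x Hx. apply Rabs_lt_all_eq0. intros e He.
    destruct (L_small e He) as [d [Hd Hsmall]].
    destruct (archimed_cor1 (d / h)) as [N [HN HN0]]; [apply Rdiv_lt_0_compat; lra|].
    apply lt_0_INR in HN0. set (y := h / INR N).
    assert (Hy : 0 < y) by (apply Rdiv_lt_0_compat; lra).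
    assert (HNy : INR N * y = h) by (unfold y; field; lra).
    assert (Hyd : y < d).
    { unfold y. apply Rmult_lt_reg_r with (/ h); [apply Rinv_0_lt_compat; lra|].
      replace (h / INR N * / h) with (/ INR N) by (field; lra).
      replace (d * / h) with (d / h) by reflexivity. exact HN. }
    assert (Ly : L y = 0).
    { apply Rmult_eq_reg_l with (INR N); [|lra].
      rewrite <- local_additive_nat, HNy by lra. rewrite Lh. ring. }
    destruct (nat_floor (x / y)) as [m [Hm1 Hm2]]; [apply Rmult_le_pos; [lra | left; apply Rinv_0_lt_compat; lra]|].
    assert (Hmy : INR m * y <= x)
      by (apply Rmult_le_reg_r with (/ y); [apply Rinv_0_lt_compat; lra|];
          replace (INR m * y * / y) with (INR m) by (field; lra); exact Hm1).
    assert (Hmy' : x < INR m * y + y)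
      by (apply Rmult_lt_reg_r with (/ y); [apply Rinv_0_lt_compat; lra|];
          replace ((INR m * y + y) * / y) with (INR m + 1) by (field; lra); exact Hm2).
    pose proof (pos_INR m).
    assert (Lmy : L (INR m * y) = 0) by (rewrite local_additive_nat, Ly by nra; ring).
    replace x with (INR m * y + (x - INR m * y)) by ring.
    rewrite L_add, Lmy, Rplus_0_l by (rewrite ?Rabs_right; nra).
    apply Hsmall. rewrite Rabs_right; lra. }
  intros x Hx. destruct (Rle_dec 0 x).
  - apply Hpos. pose proof (Rle_abs x). lra.
  - rewrite Rabs_left in Hx by lra.
    replace x with (- - x) by ring. rewrite local_additive_opp, Hpos; try lra.
    rewrite Rabs_Ropp, Rabs_left; lra.
Qed.

End LocalCauchy.

Lemma local_cauchy h L : 0 < h -> locally_additive h L -> small_near0 L ->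
  forall x, Rabs x <= h -> L x = L h / h * x.
Proof.
  intros Hh Hadd Hsmall x Hx. set (c := L h / h).
  cut (L x - c * x = 0); [lra|].
  apply (local_additive_vanish h (fun x => L x - c * x) Hh); [| | unfold c; field; lra | exact Hx].
  - intros s t Hs Ht Hst. rewrite Hadd by assumption. ring.
  - intros e He. destruct (Hsmall (e / 2)) as [d [Hd Hd']]; [lra|].
    pose proof (Rabs_pos c).
    exists (Rmin d (e / (2 * (Rabs c + 1)))); split.
    { apply Rmin_glb_lt; [lra | apply Rdiv_lt_0_compat; lra]. }
    intros y Hy. pose proof (Rmin_l d (e / (2 * (Rabs c + 1)))).
    pose proof (Rmin_r d (e / (2 * (Rabs c + 1)))).
    assert (Hcy : Rabs c * Rabs y <= e / 2).
    { apply Rle_trans with ((Rabs c + 1) * (e / (2 * (Rabs c + 1)))); [|right; field; lra].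
      pose proof (Rabs_pos y). nra. }
    specialize (Hd' y ltac:(lra)).
    unfold Rminus. eapply Rle_lt_trans; [apply Rabs_triang|].
    rewrite Rabs_Ropp, Rabs_mult. lra.
Qed.

Lemma cos_eq_1 x : cos x = 1 -> exists k : Z, x = 2 * IZR k * PI.
Proof.
  intro H. pose proof (cos_2a_sin (x / 2)) as E. replace (2 * (x / 2)) with x in E by field.
  assert (sin (x / 2) = 0) as S by nra. destruct (sin_eq_0_0 _ S) as [k Hk].
  exists k. lra.
Qed.

Lemma cos_sin_inj a b : cos a = cos b -> sin a = sin b -> Rabs (a - b) < 2 * PI -> a = b.
Proof.
  intros Hc Hs Hab. assert (cos (a - b) = 1) as E.
  { rewrite cos_minus, Hc, Hs. pose proof (sin2_cos2 b) as T. unfold Rsqr in T. lra. }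
  destruct (cos_eq_1 _ E) as [k Hk]. rewrite Hk in Hab. pose proof PI_RGT_0.
  rewrite !Rabs_mult, (Rabs_right PI), (Rabs_right 2) in Hab by lra.
  assert (Rabs (IZR k) < 1) as Hk1 by nra. apply Rabs_def2 in Hk1. destruct Hk1 as [Hk1 Hk2].
  change (- (1)) with (IZR (-1)) in Hk2. apply lt_IZR in Hk1. apply lt_IZR in Hk2.
  assert (k = 0%Z) by lia. subst k. simpl in Hk. lra.
Qed.

Lemma Cexp_eq_parts m a b : Cexp (m, a) = Cexp (m, b) -> cos a = cos b /\ sin a = sin b.
Proof.
  unfold Cexp; simpl. intro E. injection E. intros E2 E1. pose proof (exp_pos m).
  split; apply Rmult_eq_reg_l with (exp m); lra.
Qed.

Lemma Cexp_log_right z : 0 < fst z -> z = Cexp (ln (Cabs z), atan (snd z / fst z)).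
Proof.
  destruct z as [x y]; simpl; intro Hx.
  assert (Hz : (x, y) <> C0) by (unfold C0; intro E; injection E; lra).
  pose proof (Cabs_pos _ Hz) as Hr. set (r := Cabs (x, y)) in *.
  assert (Hr2 : r * r = x * x + y * y) by (unfold r; rewrite Cabs_sq; reflexivity).
  assert (Hs : sqrt (1 + (y / x)²) = r / x).
  { replace (1 + (y / x)²) with (Rsqr (r / x)).
    - apply sqrt_Rsqr. left; apply Rdiv_lt_0_compat; lra.
    - unfold Rsqr, Rdiv. replace (r * / x * (r * / x)) with (r * r * / (x * x)) by (field; lra).
      rewrite Hr2. field. lra. }
  unfold Cexp; simpl. rewrite exp_ln, cos_atan, sin_atan, Hs by lra.
  f_equal; field; lra.
Qed.

Lemma near_C1 z e : Cabs (Csub z C1) < e ->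
  Rabs (fst z - 1) < e /\ Rabs (snd z) < e /\ Rabs (Cabs z - 1) < e.
Proof.
  intro H. destruct (Cabs_components (Csub z C1)) as [H1 [H2 _]].
  destruct z as [x y]. simpl fst; simpl snd.
  change (fst (Csub (x, y) C1)) with (x - 1) in H1. change (snd (Csub (x, y) C1)) with (y - 0) in H2.
  rewrite Rminus_0_r in H2.
  pose proof (Cabs_sub_triangle (x, y) C1 C0). pose proof (Cabs_sub_triangle C1 (x, y) C0).
  replace (Csub (x, y) C0) with (x, y) in * by (unfold Csub, C0; simpl; f_equal; ring).
  replace (Csub C1 C0) with C1 in * by (unfold Csub, C0, C1; simpl; f_equal; ring).
  rewrite Cabs_C1, (Cabs_sub_sym C1) in *.
  split; [lra | split; [lra | apply Rabs_def1; lra]].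
Qed.

Lemma ln_near_1 e : 0 < e -> exists eta, 0 < eta /\ forall r, Rabs (r - 1) < eta -> Rabs (ln r) < e.
Proof.
  intro He. pose proof (exp_increasing (- e) 0 ltac:(lra)). pose proof (exp_increasing 0 e He).
  rewrite exp_0 in *. exists (Rmin (1 - exp (- e)) (exp e - 1)). split; [apply Rmin_glb_lt; lra|].
  intros r Hr. apply Rabs_def2 in Hr.
  pose proof (Rmin_l (1 - exp (- e)) (exp e - 1)). pose proof (Rmin_r (1 - exp (- e)) (exp e - 1)).
  pose proof (exp_pos (- e)).
  assert (ln r < e) by (rewrite <- (ln_exp e); apply ln_increasing; lra).
  assert (- e < ln r) by (rewrite <- (ln_exp (- e)); apply ln_increasing; lra).
  apply Rabs_def1; lra.
Qed.

Lemma atan_near_0 e : 0 < e -> exists eta, 0 < eta /\ forall v, Rabs v < eta -> Rabs (atan v) < e.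
Proof.
  intro He. pose proof PI2_3_2. pose proof (Rmin_l e 1). pose proof (Rmin_r e 1).
  assert (0 < Rmin e 1) by (apply Rmin_glb_lt; lra). set (e' := Rmin e 1) in *.
  exists (tan e'). split; [apply tan_gt_0; lra|].
  intros v Hv. apply Rabs_def2 in Hv. destruct Hv as [Hv1 Hv2].
  apply atan_increasing in Hv1. apply atan_increasing in Hv2.
  rewrite atan_opp, atan_tan in * by lra. apply Rabs_def1; lra.
Qed.

Section OneParameterSubgroup.
Variable psi : R -> Cplx.
Hypothesis psi_add : forall s t, psi (s + t) = Cmul (psi s) (psi t).
Hypothesis psi_cont0 :
  forall e, 0 < e -> exists d, 0 < d /\ forall s, Rabs s < d -> Cabs (Csub (psi s) C1) < e.

Definition log_modulus (s : R) : R := ln (Cabs (psi s)).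
Definition arg_right (s : R) : R := atan (snd (psi s) / fst (psi s)).

Lemma psi_right_half_plane : exists d, 0 < d /\ forall s, Rabs s < d -> 1 / 2 < fst (psi s).
Proof.
  destruct (psi_cont0 (1 / 2)) as [d [Hd Hpsi]]; [lra|]. exists d; split; [exact Hd|].
  intros s Hs. destruct (near_C1 _ _ (Hpsi s Hs)) as [H1 _]. apply Rabs_def2 in H1. lra.
Qed.

Lemma log_modulus_small : small_near0 log_modulus.
Proof.
  intros e He. destruct (ln_near_1 e He) as [eta [Heta Hln]].
  destruct (psi_cont0 eta Heta) as [d [Hd Hpsi]]. exists d; split; [exact Hd|].
  intros x Hx. apply Hln, (near_C1 _ _ (Hpsi x Hx)).
Qed.

Lemma arg_right_small : small_near0 arg_right.
Proof.
  intros e He. destruct (atan_near_0 e He) as [eta [Heta Hatan]].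
  destruct (psi_cont0 (Rmin (eta / 2) (1 / 2))) as [d [Hd Hpsi]]; [apply Rmin_glb_lt; lra|].
  exists d; split; [exact Hd|]. intros x Hx. apply Hatan.
  destruct (near_C1 _ _ (Hpsi x Hx)) as [Hre [Him _]].
  pose proof (Rmin_l (eta / 2) (1 / 2)). pose proof (Rmin_r (eta / 2) (1 / 2)).
  apply Rabs_def2 in Hre. set (a := snd (psi x)) in *. set (b := fst (psi x)) in *.
  unfold Rdiv. rewrite Rabs_mult, Rabs_inv, (Rabs_right b) by lra.
  apply Rmult_lt_reg_r with b; [lra|]. rewrite Rmult_assoc, Rinv_l by lra.
  pose proof (Rabs_pos a). nra.
Qed.

Lemma psi_local_exp : exists h b1 b2, 0 < h /\
  forall y, Rabs y <= h -> psi y = Cexp (b1 * y, b2 * y).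
Proof.
  destruct psi_right_half_plane as [d [Hd Hre]].
  set (h := d / 2). assert (Hh : 0 < h) by (unfold h; lra).
  assert (Hin : forall s, Rabs s <= h -> Rabs s < d) by (intros; unfold h in *; lra).
  assert (Hpolar : forall s, Rabs s <= h -> psi s = Cexp (log_modulus s, arg_right s))
    by (intros s Hs; apply Cexp_log_right; pose proof (Hre s (Hin s Hs)); lra).
  assert (Hneq0 : forall s, Rabs s <= h -> psi s <> C0)
    by (intros s Hs E; pose proof (Hre s (Hin s Hs)) as P; rewrite E in P; simpl in P; lra).
  assert (Hmod : locally_additive h log_modulus).
  { intros s t Hs Ht Hst. unfold log_modulus.
    rewrite psi_add, Cabs_mul. apply ln_mult; apply Cabs_pos, Hneq0; assumption. }
  (* Both sides are exponents of [psi (s + t)] with equal modulus, and each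
     [atan] lies in [(-PI/2, PI/2)], so they differ by less than [2 PI]. *)
  assert (Harg : locally_additive h arg_right).
  { intros s t Hs Ht Hst.
    assert (E : Cexp (log_modulus (s + t), arg_right (s + t))
              = Cexp (log_modulus (s + t), arg_right s + arg_right t)).
    { rewrite <- Hpolar, (Hmod s t) by assumption.
      change (log_modulus s + log_modulus t, arg_right s + arg_right t)
        with (Cadd (log_modulus s, arg_right s) (log_modulus t, arg_right t)).
      rewrite Cexp_add, <- !Hpolar by assumption. apply psi_add. }
    apply Cexp_eq_parts in E. destruct E as [Ec Es]. apply cos_sin_inj; [exact Ec | exact Es |].
    unfold arg_right. pose proof PI_RGT_0.
    pose proof (atan_bound (snd (psi (s + t)) / fst (psi (s + t)))).
    pose proof (atan_bound (snd (psi s) / fst (psi s))).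
    pose proof (atan_bound (snd (psi t) / fst (psi t))). apply Rabs_def1; lra. }
  exists h, (log_modulus h / h), (arg_right h / h); split; [exact Hh|].
  intros y Hy. rewrite Hpolar by exact Hy.
  rewrite <- (local_cauchy h log_modulus Hh Hmod log_modulus_small y Hy).
  rewrite <- (local_cauchy h arg_right Hh Harg arg_right_small y Hy). reflexivity.
Qed.

Lemma psi_exp_extend b1 b2 h : 0 < h ->
  (forall y, Rabs y <= h -> psi y = Cexp (b1 * y, b2 * y)) ->
  forall s, psi s = Cexp (b1 * s, b2 * s).
Proof.
  intros Hh Hloc.
  assert (Hnat : forall (N : nat) y, Rabs y <= h ->
            psi (INR N * y) = Cexp (b1 * (INR N * y), b2 * (INR N * y))).
  { intros N y Hy. induction N as [|N IH].
    - simpl. rewrite Rmult_0_l, Rmult_0_r, Rmult_0_r.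
      replace (0, 0) with (b1 * 0, b2 * 0) by (f_equal; ring). apply Hloc. rewrite Rabs_R0; lra.
    - rewrite S_INR. replace ((INR N + 1) * y) with (INR N * y + y) by ring.
      rewrite psi_add, IH, Hloc, <- Cexp_add by exact Hy.
      unfold Cadd; simpl. f_equal; f_equal; ring. }
  intro s. destruct (archimed_cor1 (h / (Rabs s + 1))) as [N [HN HN0]].
  { apply Rdiv_lt_0_compat; pose proof (Rabs_pos s); lra. }
  apply lt_0_INR in HN0.
  replace s with (INR N * (s / INR N)) by (field; lra).
  apply Hnat. unfold Rdiv. rewrite Rabs_mult, Rabs_inv, (Rabs_right (INR N)) by lra.
  pose proof (Rabs_pos s).
  apply Rmult_le_reg_r with (INR N); [lra|]. rewrite Rmult_assoc, Rinv_l, Rmult_1_r by lra.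
  apply Rmult_lt_compat_r with (r := INR N * (Rabs s + 1)) in HN; [|nra].
  replace (/ INR N * (INR N * (Rabs s + 1))) with (Rabs s + 1) in HN by (field; lra).
  replace (h / (Rabs s + 1) * (INR N * (Rabs s + 1))) with (h * INR N) in HN by (field; lra).
  lra.
Qed.

Lemma psi_exp : exists b1 b2, forall s, psi s = Cexp (b1 * s, b2 * s).
Proof.
  destruct psi_local_exp as [h [b1 [b2 [Hh Hloc]]]].
  exists b1, b2. exact (psi_exp_extend b1 b2 h Hh Hloc).
Qed.

End OneParameterSubgroup.

Lemma Cexp_0 : Cexp C0 = C1.
Proof. unfold Cexp, C0, C1; simpl. rewrite exp_0, cos_0, sin_0. f_equal; ring. Qed.

Lemma Cexp_eq_C1 a b : Cexp (a, b) = C1 -> a = 0 /\ exists k : Z, b = 2 * IZR k * PI.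
Proof.
  intro E. assert (Ha : exp a = 1) by (pose proof (Cabs_Cexp (a, b)) as M; rewrite E, Cabs_C1 in M; simpl in M; lra).
  assert (a = 0) by (apply exp_inv; rewrite exp_0; exact Ha). subst a.
  split; [reflexivity|]. apply cos_eq_1.
  unfold Cexp, C1 in E; simpl in E. injection E; intros. rewrite exp_0 in *. lra.
Qed.

Lemma Cexp_2PI : Cexp (0, 2 * PI) = C1.
Proof. unfold Cexp, C1; simpl. rewrite exp_0, cos_2PI, sin_2PI. f_equal; ring. Qed.

Lemma Cexp_log w : w <> C0 -> exists t, w = Cexp (ln (Cabs w), t).
Proof.
  intro Hw. pose proof (Cabs_pos w Hw) as Hr. pose proof (Cabs_sq w) as Hr2.
  destruct (Cabs_components w) as [Hx [Hy _]].
  destruct w as [x y]. set (r := Cabs (x, y)) in *. unfold nsq in Hr2; simpl in *.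
  assert (Hb : -1 <= x / r <= 1).
  { assert (Rabs (x / r) <= 1).
    { unfold Rdiv. rewrite Rabs_mult, Rabs_inv, (Rabs_right r) by lra.
      apply Rmult_le_reg_r with r; [lra|]. rewrite Rmult_assoc, Rinv_l by lra. lra. }
    split; [pose proof (Rle_abs (- (x / r))); rewrite Rabs_Ropp in *| pose proof (Rle_abs (x / r))]; lra. }
  assert (Hs : 1 - (x / r)² = (y / r)²).
  { unfold Rsqr. replace (x / r * (x / r)) with (x * x / (r * r)) by (field; lra).
    replace (y / r * (y / r)) with (y * y / (r * r)) by (field; lra).
    rewrite Hr2. field. nra. }
  unfold Cexp; simpl. rewrite exp_ln by lra.
  destruct (Rle_dec 0 y).
  - exists (acos (x / r)).
    assert (0 <= y / r) by (apply Rmult_le_pos; [lra | left; apply Rinv_0_lt_compat; lra]).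
    rewrite cos_acos, sin_acos, Hs, sqrt_Rsqr by assumption. f_equal; field; lra.
  - exists (- acos (x / r)).
    rewrite cos_neg, sin_neg, cos_acos, sin_acos, Hs, sqrt_Rsqr_abs by assumption.
    unfold Rdiv. rewrite Rabs_mult, Rabs_inv, (Rabs_right r), (Rabs_left y) by lra.
    f_equal; field; lra.
Qed.

Lemma Cexp_line_near0 u v : forall e, 0 < e -> exists d, 0 < d /\
  forall s, Rabs s < d -> Cabs (Csub (Cexp (u * s, v * s)) C1) < e.
Proof.
  assert (Hre : continuity_pt (fun s => exp (u * s) * cos (v * s)) 0) by reg.
  assert (Him : continuity_pt (fun s => exp (u * s) * sin (v * s)) 0) by reg.
  intros e He. destruct (Hre (e / 2)) as [d1 [Hd1 H1]]; [lra|].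
  destruct (Him (e / 2)) as [d2 [Hd2 H2]]; [lra|].
  simpl in H1, H2; unfold R_dist in H1, H2.
  rewrite !Rmult_0_r, exp_0 in H1, H2. rewrite cos_0, Rmult_1_r in H1. rewrite sin_0, Rmult_0_r in H2.
  exists (Rmin d1 d2); split; [apply Rmin_glb_lt; lra|]. intros s Hs.
  pose proof (Rmin_l d1 d2). pose proof (Rmin_r d1 d2).
  assert (Hreal : Rabs (exp (u * s) * cos (v * s) - 1) < e / 2).
  { destruct (Req_dec s 0) as [->|Hs0].
    - rewrite !Rmult_0_r, exp_0, cos_0, Rmult_1_r, Rminus_diag_eq, Rabs_R0 by reflexivity. lra.
    - apply H1. split; [split; [exact I | auto] | rewrite Rminus_0_r; lra]. }
  assert (Himag : Rabs (exp (u * s) * sin (v * s) - 0) < e / 2).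
  { destruct (Req_dec s 0) as [->|Hs0].
    - rewrite !Rmult_0_r, exp_0, sin_0, !Rmult_0_r, Rminus_diag_eq, Rabs_R0 by reflexivity. lra.
    - apply H2. split; [split; [exact I | auto] | rewrite Rminus_0_r; lra]. }
  destruct (Cabs_components (Csub (Cexp (u * s, v * s)) C1)) as [_ [_ Hc]].
  unfold Cexp, Csub, C1 in Hc |- *; simpl in Hc |- *. lra.
Qed.

Section MultiplicativeMap.
Variable F : Cplx -> Cplx.
Hypothesis F_inj : forall a b, F a = F b -> a = b.
Hypothesis F_mul : forall z w, F (Cmul z w) = Cmul (F z) (F w).
Hypothesis F_cont : Ccontinuous F.

Lemma mul_map_C0 : F C0 = C0.
Proof.
  destruct (Ceq_dec (F C0) C0) as [|H0]; [assumption|]. exfalso.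
  assert (Hconst : forall w, F w = C1).
  { intro w. apply (Cmul_cancel_l (F C0)); [exact H0|].
    rewrite <- F_mul, Cmul_0_l, Cmul_1_r. reflexivity. }
  apply C0_neq_C1, F_inj. rewrite !Hconst. reflexivity.
Qed.

Lemma mul_map_C1 : F C1 = C1.
Proof.
  assert (H1 : F C1 <> C0).
  { rewrite <- mul_map_C0. intro E. exact (C0_neq_C1 (eq_sym (F_inj _ _ E))). }
  apply (Cmul_cancel_l (F C1)); [exact H1|]. rewrite <- F_mul, !Cmul_1_r. reflexivity.
Qed.

Lemma mul_map_Cexp_line u v : exists b1 b2, forall s, F (Cexp (u * s, v * s)) = Cexp (b1 * s, b2 * s).
Proof.
  apply (psi_exp (fun s => F (Cexp (u * s, v * s)))).
  - intros s t. rewrite <- F_mul, <- Cexp_add. unfold Cadd; simpl. do 3 f_equal; ring.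
  - intros e He. destruct (F_cont C1 e He) as [d [Hd HF]].
    destruct (Cexp_line_near0 u v d Hd) as [d' [Hd' Hline]].
    exists d'; split; [exact Hd'|]. intros s Hs.
    rewrite <- mul_map_C1. apply HF, Hline, Hs.
Qed.

(* The kernel of [t ↦ e^(i c2 t)] must be [2 PI Z], the kernel of [t ↦ e^(it)]. *)
Lemma circle_exponent c1 c2 : (forall t, F (Cexp (0, t)) = Cexp (c1 * t, c2 * t)) ->
  c1 = 0 /\ (c2 = 1 \/ c2 = -1).
Proof.
  intro Hc. pose proof PI_RGT_0.
  assert (Hker : forall t, Cexp (c1 * t, c2 * t) = C1 -> exists j : Z, t = 2 * IZR j * PI).
  { intros t Ht. rewrite <- Hc, <- mul_map_C1, <- Cexp_0 in Ht.
    apply F_inj in Ht. apply (Cexp_eq_C1 0 t). rewrite Ht. apply Cexp_0. }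
  destruct (Cexp_eq_C1 (c1 * (2 * PI)) (c2 * (2 * PI))) as [Hc1 [k Hk]].
  { rewrite <- Hc, Cexp_2PI. apply mul_map_C1. }
  assert (c1 = 0) by nra. assert (Hc2 : c2 = IZR k) by nra. subst c1 c2. split; [reflexivity|].
  destruct (Z.eq_dec k 0) as [->|Hk0].
  - destruct (Hker PI) as [j Hj].
    { replace (0 * PI, 0 * PI) with C0 by (unfold C0; f_equal; ring). apply Cexp_0. }
    assert (E : IZR 1 = IZR (2 * j)) by (rewrite mult_IZR; simpl; nra).
    apply eq_IZR in E. lia.
  - apply not_0_IZR in Hk0. destruct (Hker (2 * PI / IZR k)) as [j Hj].
    { replace (0 * (2 * PI / IZR k), IZR k * (2 * PI / IZR k)) with (0, 2 * PI)
        by (f_equal; [ring | field; exact Hk0]). apply Cexp_2PI. }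
    assert (E : IZR 1 = IZR (j * k)).
    { rewrite mult_IZR. apply Rmult_eq_reg_r with (2 * PI / IZR k).
      - change (IZR 1) with 1. rewrite Hj at 1. field. exact Hk0.
      - apply Rmult_integral_contrapositive_currified; [lra | apply Rinv_neq_0_compat; exact Hk0]. }
    apply eq_IZR in E. rewrite Z.mul_comm in E. symmetry in E. apply Z.eq_mul_1 in E.
    destruct E as [-> | ->]; [left | right]; reflexivity.
Qed.

(* Continuity at [0] with [F 0 = 0]: [|F (e^s)| = e^(b1 s)] must tend to [0] as [s -> -oo]. *)
Lemma radial_exponent_pos b1 b2 : (forall s, F (Cexp (s, 0)) = Cexp (b1 * s, b2 * s)) -> 0 < b1.
Proof.
  intro Hb. destruct (Rlt_le_dec 0 b1) as [|Hle]; [assumption|]. exfalso.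
  destruct (F_cont C0 1 Rlt_0_1) as [d [Hd HF]].
  set (s := - Rabs (ln (d / 2)) - 1).
  assert (Hs : exp s < d).
  { assert (s < ln (d / 2)) as Hs by (unfold s; pose proof (Rle_abs (- ln (d / 2))); rewrite Rabs_Ropp in *; lra).
    apply exp_increasing in Hs. rewrite exp_ln in Hs by lra. lra. }
  assert (Hsub0 : forall z, Csub z C0 = z) by (intros [x y]; unfold Csub, C0; simpl; f_equal; ring).
  specialize (HF (Cexp (s, 0))). rewrite mul_map_C0, !Hsub0, Hb, !Cabs_Cexp in HF. simpl in HF.
  specialize (HF Hs).
  assert (s < 0) by (unfold s; pose proof (Rabs_pos (ln (d / 2))); lra).
  assert (0 <= b1 * s) by nra. pose proof (exp_ineq1_le (b1 * s)). lra.
Qed.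

Theorem mul_map_polar_form : exists b1 b2, 0 < b1 /\
  ((forall w, w <> C0 -> F w = Cmul w (Cabs_pow w (b1 - 1, b2))) \/
   (forall w, w <> C0 -> F w = Cmul (Cconj w) (Cabs_pow w (b1 - 1, b2)))).
Proof.
  destruct (mul_map_Cexp_line 1 0) as [b1 [b2 Hb]].
  destruct (mul_map_Cexp_line 0 1) as [c1 [c2 Hc]].
  assert (Hrad : forall s, F (Cexp (s, 0)) = Cexp (b1 * s, b2 * s))
    by (intro s; rewrite <- Hb; repeat f_equal; ring).
  assert (Hcirc : forall t, F (Cexp (0, t)) = Cexp (c1 * t, c2 * t))
    by (intro t; rewrite <- Hc; repeat f_equal; ring).
  destruct (circle_exponent c1 c2 Hcirc) as [-> Hc2].
  assert (Hpolar : forall L t, F (Cexp (L, t)) = Cexp (b1 * L, b2 * L + c2 * t)).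
  { intros L t. replace (L, t) with (Cadd (L, 0) (0, t)) by (unfold Cadd; simpl; f_equal; ring).
    rewrite Cexp_add, F_mul, Hrad, Hcirc, <- Cexp_add. unfold Cadd; simpl. do 2 f_equal; ring. }
  exists b1, b2; split; [exact (radial_exponent_pos b1 b2 Hrad)|].
  destruct Hc2; [left | right]; intros w Hw; destruct (Cexp_log w Hw) as [t Ht];
    unfold Cabs_pow; simpl fst; simpl snd; set (L := ln (Cabs w)) in *; rewrite Ht, Hpolar;
    rewrite ?Cconj_Cexp, <- Cexp_add; unfold Cadd; simpl; subst c2; do 2 f_equal; ring.
Qed.

End MultiplicativeMap.

Lemma mul_identity_C1_neq0 f : (forall a b, f a = f b -> a = b) ->
  (forall z w, Cmul (f (Cmul z w)) (f C1) = Cmul (f z) (f w)) -> f C1 <> C0.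
Proof.
  intros Hinj Hmul E.
  assert (Hzero : forall z, f z = C0)
    by (intro z; apply Cmul_self_eq0; rewrite <- Hmul, E; apply Cmul_0_r).
  apply C0_neq_C1, Hinj. rewrite !Hzero. reflexivity.
Qed.

Lemma mul_identity_normalize f c : c <> C0 ->
  (forall z w, Cmul (f (Cmul z w)) c = Cmul (f z) (f w)) ->
  forall z w, Cmul (Cinv c) (f (Cmul z w)) = Cmul (Cmul (Cinv c) (f z)) (Cmul (Cinv c) (f w)).
Proof.
  intros Hc Hmul z w.
  replace (f (Cmul z w)) with (Cmul (Cmul (f z) (f w)) (Cinv c))
    by (rewrite <- Hmul, <- Cmul_assoc, Cmul_inv, Cmul_1_r by exact Hc; reflexivity).
  pose proof (nsq_pos c Hc). destruct c, (f z), (f w); unfold nsq in *; simpl in *.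
  unfold Cmul, Cinv; simpl. f_equal; field; lra.
Qed.

Theorem lemma3p1 (p1 p2 q1 q2 : Cplx) (f : Cplx -> Cplx)
  (hp1 : p1 <> C0) (hp2 : p2 <> C0) (hq1 : q1 <> C0) (hq2 : q2 <> C0)
  (hdense : subgroup2_dense p1 p2)
  (hf : Chomeomorphism f)
  (h1 : forall w, f (Cmul p1 w) = Cmul q1 (f w))
  (h2 : forall w, f (Cmul p2 w) = Cmul q2 (f w)) :
  exists gamma alpha : Cplx,
    -1 < Cre alpha /\ f C0 = C0 /\
    ((forall w, w <> C0 -> f w = Cmul gamma (Cmul w (Cabs_pow w alpha))) \/
     (forall w, w <> C0 -> f w = Cmul gamma (Cmul (Cconj w) (Cabs_pow w alpha)))).
Proof.
  destruct hf as [g [Hgf [_ [Hcont _]]]].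
  assert (Hinj : forall a b, f a = f b -> a = b)
    by (intros a b E; rewrite <- (Hgf a), <- (Hgf b), E; reflexivity).
  pose proof (dense_rescales_mul_identity f Hcont
    (subgroup2_dense_rescales f p1 p2 Hinj hp1 hp2 (ex_intro _ q1 h1) (ex_intro _ q2 h2) hdense))
    as Hmul.
  pose proof (mul_identity_C1_neq0 f Hinj Hmul) as Hc. set (c := f C1) in *.
  set (F := fun w => Cmul (Cinv c) (f w)).
  assert (HfF : forall w, f w = Cmul c (F w))
    by (intro w; unfold F; rewrite Cmul_assoc, Cmul_inv, Cmul_1_l by exact Hc; reflexivity).
  assert (HFinj : forall a b, F a = F b -> a = b)
    by (intros a b E; apply Hinj; rewrite HfF, E, <- HfF; reflexivity).
  assert (HFcont : Ccontinuous F) by exact (Ccontinuous_comp _ _ (Ccontinuous_scale _) Hcont).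
  destruct (mul_map_polar_form F HFinj (mul_identity_normalize f c Hc Hmul) HFcont)
    as [b1 [b2 [Hb1 Hform]]].
  exists c, (b1 - 1, b2). split; [unfold Cre; simpl; lra|].
  split; [rewrite HfF, (mul_map_C0 F HFinj (mul_identity_normalize f c Hc Hmul)); apply Cmul_0_r|].
  destruct Hform as [H | H]; [left | right]; intros w Hw; rewrite HfF, H by exact Hw; reflexivity.
Qed.
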